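(* Consider the anti-coordination game ($\mathcal V_a=\mathcal V$). (1) If $x^*$ is a Nash equilibrium and $z^*=z(x^* )$, then for every $\epsilon_a\in(\tfrac1n,\tfrac2n]$, $$G_a\!\left(\tfrac{n}{n-1}(z^*-\epsilon_a)\right)\ \ge\ z^*\ \ge\ G_a\!\left(\tfrac{n}{n-1}z^*\right).$$ (2) Conversely, if $z^*\in\{0,\tfrac1n,\dots,1\}$ satisfies these inequalities for every $\epsilon_a\in(\tfrac1n,\tfrac2n]$, then there exists a Nash equilibrium $x^*$ with $z(x^* )=z^*$.
   Context: Let $\mathcal V$ be a finite set of $n\ge2$ agents, all anti-coordinating. Given real weights $d_i$, the anti-coordination game has action set $\{-1,+1\}$, configuration space $\mathcal X=\{-1,+1\}^{\mathcal V}$ and utilities $u_i(x)=-\big(\sum_{j\neq i}x_ix_j-d_ix_i\big)$. A (pure) Nash equilibrium is an $x\in\mathcal X$ with $u_i(x)\ge u_i(y_i,x_{-i})$ for all $i$ and $y_i\in\{-1,+1\}$. Thresholds: $r_i=\tfrac12+\tfrac{d_i}{2(n-1)}$. For $x\in\mathcal X$, $z(x)=\frac1n|\{i: x_i=+1\}|$. The threshold complementary CDF is $G_a(t)=\frac1n|\{i\in\mathcal V: r_i> t\}|$, $t\in\mathbb R$. *)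

From HB Require Import structures.
From mathcomp Require Import all_boot all_order all_algebra.
Set Implicit Arguments. Unset Strict Implicit. Unset Printing Implicit Defensive.
Import Order.TTheory GRing.Theory Num.Theory.
Local Open Scope ring_scope.

(* Agents are 'I_n.  An action is a bool: true = +1, false = -1. *)
Definition spin (R : numDomainType) (b : bool) : R := if b then 1 else -1.

Definition upd (n : nat) (x : 'I_n -> bool) (i : 'I_n) (y : bool) : 'I_n -> bool :=
  fun j => if j == i then y else x j.

Definition utility (R : numDomainType) (n : nat) (d : 'I_n -> R)
  (x : 'I_n -> bool) (i : 'I_n) : R :=
  - (\sum_(j < n | j != i) spin R (x i) * spin R (x j) - d i * spin R (x i)).

Definition nash (R : numDomainType) (n : nat) (d : 'I_n -> R) (x : 'I_n -> bool) : Prop :=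
  forall (i : 'I_n) (y : bool), utility d (upd x i y) i <= utility d x i.

Definition thr (R : numFieldType) (n : nat) (d : 'I_n -> R) (i : 'I_n) : R :=
  2^-1 + d i / (2 * (n.-1)%:R).

Definition zfrac (R : numFieldType) (n : nat) (x : 'I_n -> bool) : R :=
  #|[set i | x i]|%:R / n%:R.

Definition Ga (R : realFieldType) (n : nat) (d : 'I_n -> R) (t : R) : R :=
  #|[set i | t < thr d i]|%:R / n%:R.

From HB Require Import structures.
From mathcomp Require Import all_boot all_order all_algebra.
From mathcomp Require Import zify ring lra.
Import Order.TTheory GRing.Theory Num.Theory.
Local Open Scope ring_scope.

(* With k the number of +1 players and m_i := (n-1) + d_i = 2 (n-1) r_i,
   agent i faces the opponent sum 2k - n - x_i, so a +1 agent is content iff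
   m_i >= 2k - 2 and a -1 agent iff m_i <= 2k.  Rescaled, the two inequalities
   on G_a say #{m_i > 2k - 2 n eps} >= k and #{m_i > 2k} <= k; in an
   equilibrium the +1 agents lie in the first set (as n eps > 1) and contain
   the second, which gives (1).  Conversely, only finitely many m_i lie below
   2k - 2, so some eps in (1/n, 2/n] puts 2k - 2 n eps in the gap just below
   it, whence #{m_i >= 2k - 2} >= k; any k-set squeezed between the two sets
   is the +1 set of an equilibrium. *)

Lemma exists_subset_card {T : finType} (A : {set T}) m :
  (m <= #|A|)%N -> exists2 S : {set T}, S \subset A & #|S| = m.
Proof.
move=> mA; exists [set x in take m (enum A)].
  by apply/subsetP=> x; rewrite inE => /mem_take; rewrite mem_enum.
rewrite cardsE; have /card_uniqP := take_uniq m (enum_uniq (mem A)).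
by rewrite size_takel -?cardE.
Qed.

Lemma exists_between_card {T : finType} (A B : {set T}) k :
  B \subset A -> (#|B| <= k <= #|A|)%N ->
  exists S : {set T}, [/\ B \subset S, S \subset A & #|S| = k].
Proof.
move=> BA /andP[Bk kA].
have [|S' S'AB cardS'] := exists_subset_card (A :\: B) (k - #|B|).
  by rewrite cardsD (setIidPr BA) leq_sub2r.
have BS'0 : B :&: S' = set0.
  apply/setP=> x; rewrite !inE; apply/andP=> -[xB xS'].
  by move: (subsetP S'AB x xS'); rewrite !inE xB.
exists (B :|: S'); split; first exact: subsetUl.
  by rewrite subUset BA (subset_trans S'AB) ?subsetDl.
by rewrite cardsU BS'0 cards0 cardS' subn0 subnKC.
Qed.

Lemma exists_gap_below {R : realDomainType} {T : finType} (f : T -> R) (c e : R) :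
  0 < e -> exists c', [/\ c - e <= c', c' < c & forall i, c' < f i -> c <= f i].
Proof.
move=> e_gt0; exists (\big[Order.max/(c - e)]_(i | f i < c) f i); split.
- exact: bigmax_ge_id.
- by apply: bigmax_lt => //; lra.
- move=> i lt_i; rewrite leNgt; apply/negP => fi_lt.
  by have := @le_bigmax_cond _ _ _ (c - e) _ (fun j => f j < c) f fi_lt; rewrite leNgt lt_i.
Qed.

Lemma sum_spin (R : numDomainType) n (x : 'I_n -> bool) :
  \sum_j spin R (x j) = 2 * #|[set j | x j]|%:R - n%:R.
Proof.
rewrite (bigID x) /= (eq_bigr (fun=> 1)) => [|j ->//].
rewrite [X in _ + X](eq_bigr (fun=> -1)) => [|j /negbTE ->//].
have nE : n%:R = #|x|%:R + #|[predC x]|%:R :> R by rewrite -natrD cardC card_ord.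
by rewrite !sumr_const cardsE nE mulNrn; ring.
Qed.

Section AntiCoordination.
Variables (R : realFieldType) (n : nat) (d : 'I_n -> R).
Hypothesis n_ge2 : (2 <= n)%N.

Local Notation nR := (n%:R : R).
Local Notation N := ((n.-1)%:R : R).
Local Notation opp_sum x i := (\sum_(j < n | j != i) spin R (x j)).

Lemma utilityE x i : utility d x i = spin R (x i) * (d i - opp_sum x i).
Proof. by rewrite /utility -mulr_sumr mulrBr opprB [d i * _]mulrC. Qed.

Lemma utility_updE x i y : utility d (upd x i y) i = spin R y * (d i - opp_sum x i).
Proof.
rewrite /utility /upd eqxx (eq_bigr (fun j => spin R y * spin R (x j))).
  by rewrite -mulr_sumr mulrBr opprB [d i * _]mulrC.
by move=> j /negbTE ->.
Qed.

Lemma nash_best_responseE x :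
  nash d x <-> forall i, if x i then opp_sum x i <= d i else d i <= opp_sum x i.
Proof.
split=> [xN i | xbest i y].
  by have := xN i (~~ x i); rewrite utility_updE utilityE; case: (x i); rewrite /spin /=; lra.
by rewrite utility_updE utilityE; have := xbest i; case: (x i); case: y; rewrite /spin /=; lra.
Qed.

Lemma opp_sumE x i : opp_sum x i = 2 * #|[set j | x j]|%:R - nR - spin R (x i).
Proof. by rewrite -sum_spin [\sum_(j < n) _](bigD1 i) //= addrC addrK. Qed.

Lemma nash_countE x :
  nash d x <-> forall i, let k := #|[set j | x j]|%:R in
    if x i then 2 * k - 2 <= N + d i else N + d i <= 2 * k.
Proof.
rewrite nash_best_responseE; split=> xbest i /=;
  have nE : nR = N + 1 by rewrite natr1 prednK // (leq_ltn_trans _ (ltn_ord i)).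
all: by have := xbest i; rewrite opp_sumE; case: (x i); rewrite /spin /=; lra.
Qed.

Definition score_gt (c : R) : {set 'I_n} := [set i | c < N + d i].
Definition score_ge (c : R) : {set 'I_n} := [set i | c <= N + d i].

Let nR_gt0 : 0 < nR. Proof. by rewrite ltr0n; lia. Qed.
Let N_gt0 : 0 < N. Proof. by rewrite ltr0n; lia. Qed.

Lemma Ga_scaledE a : Ga d (nR / N * (a / nR)) = #|score_gt (2 * a)|%:R / nR.
Proof.
rewrite /Ga; congr (_%:R / _); apply: eq_card => i; rewrite !inE /thr.
have -> : nR / N * (a / nR) = 2 * a / (2 * N) by field; rewrite !lt0r_neq0.
have -> : 2^-1 + d i / (2 * N) = (N + d i) / (2 * N) by field; rewrite lt0r_neq0.
by rewrite ltr_pM2r // invr_gt0 mulr_gt0.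
Qed.

Lemma ler_div_nR (a b : nat) : (a%:R / nR <= b%:R / nR) = (a <= b)%N.
Proof. by rewrite ler_pM2r ?invr_gt0 // ler_nat. Qed.

Lemma Ga_lowerE (k : nat) e :
  (k%:R / nR <= Ga d (nR / N * (k%:R / nR - e))) =
  (k <= #|score_gt (2 * (k%:R - nR * e))|)%N.
Proof.
rewrite (_ : k%:R / nR - e = (k%:R - nR * e) / nR) ?Ga_scaledE ?ler_div_nR //.
by field; rewrite lt0r_neq0.
Qed.

Lemma Ga_upperE (k : nat) :
  (Ga d (nR / N * (k%:R / nR)) <= k%:R / nR) = (#|score_gt (2 * k%:R)| <= k)%N.
Proof. by rewrite Ga_scaledE ler_div_nR. Qed.

Lemma eps_gtE e : (nR^-1 < e) = (1 < nR * e).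
Proof. by rewrite -[nR^-1]mulr1 ltr_pdivrMl. Qed.

Lemma eps_leE e : (e <= 2 / nR) = (nR * e <= 2).
Proof. by rewrite mulrC ler_pdivlMl. Qed.

Lemma mul_nR_divK s : nR * (s / nR) = s.
Proof. by rewrite mulrC divfK // lt0r_neq0. Qed.

Lemma exists_nash_count (k : nat) :
  (#|score_gt (2 * k%:R)| <= k <= #|score_ge (2 * k%:R - 2)|)%N ->
  exists x, nash d x /\ #|[set j | x j]| = k.
Proof.
move=> k_bounds.
have gt_ge : score_gt (2 * k%:R) \subset score_ge (2 * k%:R - 2).
  by apply/subsetP=> i; rewrite !inE; lra.
have [S [gtS Sge cardS]] := exists_between_card _ _ _ gt_ge k_bounds.
exists (fun i => i \in S); split; last by rewrite cardsE.
apply/nash_countE=> i /=; rewrite cardsE cardS; case: ifP => iS.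
  by move: (subsetP Sge i iS); rewrite inE.
have : i \notin score_gt (2 * k%:R) by apply: contraFN iS => /(subsetP gtS).
by rewrite inE -leNgt.
Qed.

Lemma Ga_lower_card_score_ge (k : nat) :
  (forall e, nR^-1 < e -> e <= 2 / nR -> k%:R / nR <= Ga d (nR / N * (k%:R / nR - e))) ->
  (k <= #|score_ge (2 * k%:R - 2)|)%N.
Proof.
move=> Ga_lower.
have [c [c_ge c_lt gap]] := exists_gap_below (fun i => N + d i) (2 * k%:R - 2) 2 (ltr0Sn _ 1).
pose e := (k%:R - c / 2) / nR.
have e_gt : nR^-1 < e by rewrite eps_gtE mul_nR_divK; lra.
have e_le : e <= 2 / nR by rewrite eps_leE mul_nR_divK; lra.
have := Ga_lower e e_gt e_le; rewrite Ga_lowerE mul_nR_divK => /leq_trans; apply.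
apply/subset_leq_card/subsetP=> i; rewrite !inE.
by rewrite (_ : 2 * (k%:R - (k%:R - c / 2)) = c); [exact: gap | field].
Qed.

End AntiCoordination.

Arguments score_gt {R n} d c.
Arguments score_ge {R n} d c.

Theorem corollary2 (R : realFieldType) (n : nat) (hn : (2 <= n)%N) (d : 'I_n -> R) :
  (forall x : 'I_n -> bool, nash d x ->
     forall eps : R, n%:R^-1 < eps -> eps <= 2 / n%:R ->
       zfrac R x <= Ga d (n%:R / (n.-1)%:R * (zfrac R x - eps)) /\
       Ga d (n%:R / (n.-1)%:R * zfrac R x) <= zfrac R x)
  /\
  (forall k : nat, (k <= n)%N ->
     (forall eps : R, n%:R^-1 < eps -> eps <= 2 / n%:R ->
        k%:R / n%:R <= Ga d (n%:R / (n.-1)%:R * (k%:R / n%:R - eps)) /\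
        Ga d (n%:R / (n.-1)%:R * (k%:R / n%:R)) <= k%:R / n%:R) ->
     exists x : 'I_n -> bool, nash d x /\ zfrac R x = k%:R / n%:R).
Proof.
split=> [x /nash_countE x_nash e | k _ eps_bounds].
  rewrite eps_gtE // eps_leE // => e_gt e_le.
  rewrite /zfrac Ga_lowerE // Ga_upperE //.
  split; apply/subset_leq_card/subsetP=> i; rewrite !inE; have := x_nash i;
    by case: (x i) => //= ? ?; lra.
have upper : (#|score_gt d (2 * k%:R)| <= k)%N.
  have e_gt : n%:R^-1 < 2 / n%:R :> R by rewrite eps_gtE // mul_nR_divK //; lra.
  by have [_] := eps_bounds _ e_gt (lexx _); rewrite Ga_upperE.
have lower : (k <= #|score_ge d (2 * k%:R - 2)|)%N.
  by apply: Ga_lower_card_score_ge => // e e_gt e_le; have [] := eps_bounds e e_gt e_le.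
have [x [x_nash cardx]] : exists x, nash d x /\ #|[set j | x j]| = k.
  by apply: exists_nash_count; rewrite upper lower.
by exists x; rewrite /zfrac cardx.
Qed.
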